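(* Let $p,q$ be integers with $1+|p|<|q|$ and let $g\in\mathbb{Z}[x]$. Let $\varphi_g:\mathrm{Dom}_{p,q}\to\mathrm{Dom}_{p,q}$ be the map sending $w$ to the unique $w'\in\mathrm{Dom}_{p,q}$ with $\psi_{p,q}(w')=[g\cdot f_w]_\sim$, where $f_w$ is the polynomial represented by $w$. Then $\varphi_g$ is FA-recognizable (its graph $\{(w,\varphi_g(w))\}$ is an FA-recognizable binary relation).
   Context: Let $p,q$ be integers with $1+|p|<|q|$ and $t(x)=x^2+px-q$. For $f,g\in\mathbb{Z}[x]$ write $f\sim g$ if $t$ divides $f-g$; identify $\mathbb{Z}^2$ with the additive group of $\mathbb{Z}[x]/\langle t\rangle$ via $(h_1,h_2)\mapsto[h_1x+h_2]_\sim$, and put $\eta=[x]_\sim$, $\xi=[1]_\sim$. A polynomial $\sum a_ix^i$ is reduced if $|a_i|<|q|$ for all $i$. Let $\Sigma_q=\{-(|q|-1),\dots,|q|-1\}$ with the order $-(|q|-1)<\dots<|q|-1$; a string $a_0a_1\dots a_n\in\Sigma_q^*$ represents the reduced polynomial $a_nx^n+\dots+a_1x+a_0$, and two strings are equivalent if their polynomials are $\sim$-equivalent. $\mathrm{Dom}_{p,q}$ is the set of $w\in\Sigma_q^*$ such that no string $u$ strictly smaller than $w$ in the length-lexicographic order on $\Sigma_q^*$ is equivalent to $w$, and $\psi_{p,q}:\mathrm{Dom}_{p,q}\to\mathbb{Z}^2$ sends $w$ to the $\sim$-class of the polynomial it represents (this is a bijection). For strings $w_1,\dots,w_m$ over an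 alphabet $\Sigma$, their convolution $w_1\otimes\dots\otimes w_m$ is the string over $(\Sigma\cup\{\diamond\})^m$ of length $\max|w_i|$ whose $k$-th letter is the column $(\sigma_1,\dots,\sigma_m)$, $\sigma_i$ being the $k$-th letter of $w_i$ if $k\le|w_i|$ and the padding symbol $\diamond$ otherwise. A relation $R\subseteq(\Sigma^* )^m$ is FA-recognizable if $\{w_1\otimes\dots\otimes w_m:(w_1,\dots,w_m)\in R\}$ is accepted by a finite automaton; a function is FA-recognizable if its graph is. *)

From HB Require Import structures.
From mathcomp Require Import all_boot all_order all_algebra.
Set Implicit Arguments. Unset Strict Implicit. Unset Printing Implicit Defensive.
Import Order.TTheory GRing.Theory Num.Theory.
Local Open Scope ring_scope.

Definition tpoly (p q : int) : {poly int} := 'X^2 + p%:P * 'X - q%:P.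

Definition simeq (p q : int) (f g : {poly int}) : Prop :=
  exists h : {poly int}, f - g = h * tpoly p q.

Definition in_Sigma (q : int) (w : seq int) : bool := all (fun a => `|a| < `|q|) w.

(* the string a_0 a_1 ... a_n represents a_n x^n + ... + a_1 x + a_0 *)
Definition poly_of (w : seq int) : {poly int} := Poly w.

Definition str_equiv (p q : int) (u w : seq int) : Prop :=
  simeq p q (poly_of u) (poly_of w).

(* strict lexicographic order (used on strings of equal length) *)
Fixpoint lex_lt (u w : seq int) : bool :=
  match u, w with
  | a :: u', b :: w' => (a < b) || ((a == b) && lex_lt u' w')
  | _, _ => false
  end.

Definition llex_lt (u w : seq int) : bool :=
  (size u < size w)%N || ((size u == size w) && lex_lt u w).

Definition Dom (p q : int) (w : seq int) : Prop :=
  in_Sigma q w /\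
  forall u : seq int, in_Sigma q u -> llex_lt u w -> ~ str_equiv p q u w.

Definition phi_graph (p q : int) (g : {poly int}) (w w' : seq int) : Prop :=
  Dom p q w /\ Dom p q w' /\ simeq p q (poly_of w') (g * poly_of w).

(* convolution of two strings; None is the padding symbol *)
Fixpoint conv2 (u w : seq int) {struct u} : seq (option int * option int) :=
  match u with
  | [::] => map (fun b => (None, Some b)) w
  | a :: u' =>
      match w with
      | [::] => (Some a, None) :: conv2 u' [::]
      | b :: w' => (Some a, Some b) :: conv2 u' w'
      end
  end.

Record dfa (A : Type) := DFA {
  dfa_state : finType;
  dfa_start : dfa_state;
  dfa_final : pred dfa_state;
  dfa_trans : dfa_state -> A -> dfa_state }.

Definition dfa_accepts (A : Type) (M : dfa A) (x : seq A) : bool :=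
  @dfa_final A M (foldl (@dfa_trans A M) (@dfa_start A M) x).

Definition FA_recognizable_lang (A : Type) (L : seq A -> Prop) : Prop :=
  exists M : dfa A, forall x, dfa_accepts M x <-> L x.

Definition FA_recognizable_rel2 (R : seq int -> seq int -> Prop) : Prop :=
  FA_recognizable_lang (fun x => exists u w, R u w /\ x = conv2 u w).

From HB Require Import structures.
From mathcomp Require Import all_boot all_order all_algebra.
From mathcomp Require Import zify ring.
Set Implicit Arguments. Unset Strict Implicit. Unset Printing Implicit Defensive.
Import Order.TTheory GRing.Theory Num.Theory.
Local Open Scope ring_scope.

(* Reduce [g] modulo [t] to [b + a x]; then [phi_g u = w] iff [w ~ (b + a x) u].
   Such congruences are checked by an automaton reading the strings in
   parallel from the lowest digit: it carries the part of the quotient by [t]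
   still to be matched, and because [1 + |p| < |q|] this carry stays bounded
   by the size of the digits, so finitely many states suffice.  A string lies
   in [Dom] unless some smaller equivalent string exists; that string (padded
   with zeros when it is shorter) is guessed letter by letter through the
   subset construction, while the automaton also compares lexicographically.
   The graph of [phi_g] is then the set of well-formed convolutions whose
   components lie in [Dom] and which pass the multiplication check. *)

Section Recognizable.
Variable A : Type.
Implicit Types (L : seq A -> Prop) (x : seq A).

Lemma fa_recognizable_ext L L' :
  (forall x, L x <-> L' x) -> FA_recognizable_lang L -> FA_recognizable_lang L'.
Proof. by move=> eqL [M hM]; exists M => x; rewrite hM. Qed.

Lemma fa_recognizable_closed (S : choiceType) (U : seq S) (s0 : S)
    (tr : S -> A -> S) (fin : pred S) L :
  s0 \in U -> (forall s a, s \in U -> tr s a \in U) ->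
  (forall x, fin (foldl tr s0 x) <-> L x) -> FA_recognizable_lang L.
Proof.
move=> U_s0 U_tr finL.
pose trU (s : seq_sub U) a : seq_sub U := SeqSub (U_tr (ssval s) a (ssvalP s)).
exists (DFA (SeqSub U_s0) (fun s => fin (ssval s)) trU) => x; rewrite /dfa_accepts /=.
suff -> : forall s, ssval (foldl trU s x) = foldl tr (ssval s) x by apply: finL.
by elim: x => [|a x IHx] s //=; rewrite IHx.
Qed.

Lemma fa_recognizable_and L1 L2 :
  FA_recognizable_lang L1 -> FA_recognizable_lang L2 ->
  FA_recognizable_lang (fun x => L1 x /\ L2 x).
Proof.
case=> M1 hM1 [M2 hM2].
pose tr (s : dfa_state M1 * dfa_state M2) a := (dfa_trans s.1 a, dfa_trans s.2 a).
exists (DFA (dfa_start M1, dfa_start M2)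
            (fun s => dfa_final s.1 && dfa_final s.2) tr) => x.
have foldl_tr s1 s2 : foldl tr (s1, s2) x
    = (foldl (@dfa_trans A M1) s1 x, foldl (@dfa_trans A M2) s2 x).
  by elim: x s1 s2 => [|a x IHx] s1 s2 //=; rewrite IHx.
by rewrite -hM1 -hM2 /dfa_accepts /= foldl_tr; split => [/andP|[-> ->]].
Qed.

Lemma fa_recognizable_not L :
  FA_recognizable_lang L -> FA_recognizable_lang (fun x => ~ L x).
Proof.
case=> M hM; exists (DFA (dfa_start M) (fun s => ~~ dfa_final s) (@dfa_trans A M)) => x.
by rewrite -hM /dfa_accepts; split => /negP.
Qed.

Lemma fa_recognizable_all (P : pred A) : FA_recognizable_lang (fun x => all P x).
Proof.
exists (DFA true id (fun b a => b && P a)) => x; rewrite /dfa_accepts /=.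
suff -> : forall b, foldl (fun b a => b && P a) b x = b && all P x by [].
by elim: x => [|a x IHx] b /=; rewrite ?andbT // IHx andbA.
Qed.

Lemma fa_recognizable_pmap (B : Type) (f : A -> option B) (L : seq B -> Prop) :
  FA_recognizable_lang L -> FA_recognizable_lang (fun x => L (pmap f x)).
Proof.
case=> M hM.
pose tr (s : dfa_state M) a := if f a is Some b then dfa_trans s b else s.
exists (DFA (dfa_start M) (@dfa_final B M) tr) => x.
rewrite -hM /dfa_accepts.
suff -> : forall s, foldl tr s x = foldl (@dfa_trans B M) s (pmap f x) by [].
by elim: x => [|a x IHx] s //=; rewrite /tr; case: (f a).
Qed.

End Recognizable.

Section ExistsZip.
Variables (A : eqType) (B : Type) (sA : seq A) (M : dfa (A * B)).
Local Notation S := (dfa_state M).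

Definition zip_guess_trans (X : {set S}) (b : B) : {set S} :=
  [set m' | [exists m in X, has (fun a => dfa_trans m (a, b) == m') sA]].

Lemma zip_guess_run w (X : {set S}) m :
  m \in foldl zip_guess_trans X w <->
  exists2 m0, m0 \in X & exists u, [/\ size u = size w, {subset u <= sA}
    & foldl (@dfa_trans _ M) m0 (zip u w) = m].
Proof.
elim: w X => [|b w IHw] X /=.
  split=> [Xm|[m0 Xm0 [[|a u] [//= _ _ <-]]]]; last by [].
  by exists m; last by exists [::].
rewrite IHw; split.
  case=> m1 /[!inE] /existsP[m0 /andP[Xm0 /hasP[a sAa /eqP trm0]]].
  case=> u [sz_u sub_u run_u]; exists m0 => //; exists (a :: u); split => /=.
  - by rewrite sz_u.
  - by move=> c /[!inE] /orP[/eqP->|/sub_u].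
  - by rewrite trm0.
case=> m0 Xm0 [[|a u] [//= [sz_u] sub_u run_u]].
exists (dfa_trans m0 (a, b)).
  rewrite inE; apply/existsP; exists m0; rewrite Xm0 /=.
  by apply/hasP; exists a => //; apply: sub_u; rewrite mem_head.
by exists u; split => // c uc; apply: sub_u; rewrite inE uc orbT.
Qed.

End ExistsZip.

Lemma fa_recognizable_exists_zip (A : eqType) (B : Type) (sA : seq A)
    (L : seq (A * B) -> Prop) :
  FA_recognizable_lang L ->
  FA_recognizable_lang (fun w => exists u,
    [/\ size u = size w, {subset u <= sA} & L (zip u w)]).
Proof.
case=> M hM.
exists (DFA [set dfa_start M] (fun X => [exists m in X, dfa_final m])
            (@zip_guess_trans A B sA M)) => w.
rewrite /dfa_accepts /=; split.
  case/existsP=> m /andP[/zip_guess_run[m0 /[!inE] /eqP-> [u [sz_u sub_u run_u]]] fin_m].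
  by exists u; split => //; apply/hM; rewrite /dfa_accepts run_u.
case=> u [sz_u sub_u /hM Lu]; apply/existsP.
exists (foldl (@dfa_trans _ M) (dfa_start M) (zip u w)); rewrite [dfa_final _]Lu andbT.
by apply/zip_guess_run; exists (dfa_start M); rewrite ?inE //; exists u.
Qed.

Lemma pmap_fst_conv2 (u w : seq int) : pmap fst (conv2 u w) = u.
Proof.
elim: u w => [|a u IHu] [|b w] /=; rewrite ?IHu //.
by elim: w => //= c w ->.
Qed.

Lemma pmap_snd_conv2 (u w : seq int) : pmap snd (conv2 u w) = w.
Proof.
elim: u w => [|a u IHu] [|b w] /=; rewrite ?IHu //.
by congr (_ :: _); elim: w => //= c w ->.
Qed.

(* [Some (e1, e2)]: component [i] of the convolution has ended iff [ei];
   [None] is the dead state. *)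
Definition conv_trans (s : option (bool * bool)) (l : option int * option int) :=
  if s is Some (e1, e2) then
    match l with
    | (Some _, Some _) => if e1 || e2 then None else s
    | (Some _, None) => if e1 then None else Some (false, true)
    | (None, Some _) => if e2 then None else Some (true, false)
    | (None, None) => None
    end
  else None.

Lemma conv_run_dead x : foldl conv_trans None x = None.
Proof. by elim: x. Qed.

Lemma conv_run_left x :
  foldl conv_trans (Some (false, true)) x != None <-> exists u, x = conv2 u [::].
Proof.
elim: x => [|[[a|] [b|]] x IHx] /=; rewrite ?conv_run_dead.
- by split => // _; exists [::].
- by split => // -[[|c u]].
- rewrite IHx; split => [[u ->]|[[|c u] //= [_ ->]]]; last by exists u.
  by exists (a :: u).
- by split => // -[[|c u]].
- by split => // -[[|c u]].
Qed.

Lemma conv_run_right x :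
  foldl conv_trans (Some (true, false)) x != None <-> exists w, x = conv2 [::] w.
Proof.
elim: x => [|[[a|] [b|]] x IHx] /=; rewrite ?conv_run_dead.
- by split => // _; exists [::].
- by split => // -[[|c w]].
- by split => // -[[|c w]].
- rewrite IHx; split => [[w ->]|[[|c w] //= [_ ->]]]; last by exists w.
  by exists (b :: w).
- by split => // -[[|c w]].
Qed.

Lemma conv_run x :
  foldl conv_trans (Some (false, false)) x != None <-> exists u w, x = conv2 u w.
Proof.
elim: x => [|[[a|] [b|]] x IHx] /=.
- by split => // _; exists [::], [::].
- rewrite IHx; split => [[u [w ->]]|[[|c u] [[|d w] //= [_ _ ->]]]].
    by exists (a :: u), (b :: w).
  by exists u, w.
- rewrite conv_run_left; split => [[u ->]|[[|c u] [[|d w] //= [_ ->]]]].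
    by exists (a :: u), [::].
  by exists u.
- rewrite conv_run_right; split => [[w ->]|[[|c u] [[|d w] //= [_ ->]]]].
    by exists [::], (b :: w).
  by exists w.
- by rewrite conv_run_dead; split => // -[[|c u] [[|d w]]].
Qed.

Lemma fa_recognizable_conv2 (P Q : seq int -> Prop)
    (L : seq (option int * option int) -> Prop) :
  FA_recognizable_lang P -> FA_recognizable_lang Q -> FA_recognizable_lang L ->
  FA_recognizable_lang (fun x => exists u w, [/\ P u, Q w & L x] /\ x = conv2 u w).
Proof.
move=> faP faQ faL.
have faConv : FA_recognizable_lang (fun x => exists u w, x = conv2 u w).
  by exists (DFA (Some (false, false)) (fun s => s != None) conv_trans) => x; apply: conv_run.
have := fa_recognizable_and faConv (fa_recognizable_and
  (fa_recognizable_pmap fst faP) (fa_recognizable_and (fa_recognizable_pmap snd faQ) faL)).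
apply: fa_recognizable_ext => x; split.
  case=> -[u [w ->]] [+ [+ Lx]]; rewrite pmap_fst_conv2 pmap_snd_conv2 => Pu Qw.
  by exists u, w.
case=> u [w [[Pu Qw Lx] eq_x]]; subst x.
by rewrite pmap_fst_conv2 pmap_snd_conv2; split; [exists u, w | do !split].
Qed.

Lemma map_fst_conv2 (u w : seq int) :
  [seq odflt 0 l.1 | l <- conv2 u w] = u ++ nseq (size w - size u) 0.
Proof.
elim: u w => [|a u IHu] [|b w] //=; rewrite ?IHu //.
by congr (_ :: _); elim: w => //= c w ->.
Qed.

Lemma map_snd_conv2 (u w : seq int) :
  [seq odflt 0 l.2 | l <- conv2 u w] = w ++ nseq (size u - size w) 0.
Proof.
elim: u w => [|a u IHu] [|b w] //=; rewrite ?IHu ?subn0 //.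
by rewrite cats0; congr (_ :: _); elim: w => //= c w ->.
Qed.

Definition ints_within (n : nat) : seq int := [seq i%:Z - n%:Z | i <- iota 0 (2 * n).+1].

Lemma mem_ints_within n x : (x \in ints_within n) = (`|x| <= n%:Z).
Proof.
rewrite ler_norml; apply/mapP/idP.
- by case=> i; rewrite mem_iota => /andP[_ lt_i] ->; apply/andP; split; lia.
- case/andP => ge_x le_x; exists (absz (x + n%:Z)); last by lia.
  by rewrite mem_iota /=; lia.
Qed.

Lemma mem_allpairs_pair (T1 T2 : eqType) (s : seq T1) (t : seq T2) x y :
  ((x, y) \in [seq (a, b) | a <- s, b <- t]) = (x \in s) && (y \in t).
Proof.
apply/idP/andP; last by case=> sx ty; apply: allpairs_f.
by case/allpairsP => -[a b] /= [sa tb [-> ->]].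
Qed.

Section Carry.
Variables p q : int.

Lemma size_tpoly_low : (size (p%:P * 'X - q%:P : {poly int})%R < 3)%N.
Proof.
apply: leq_ltn_trans (size_polyD _ _) _; rewrite size_polyN size_polyC gtn_max.
apply/andP; split; last by case: (q != 0).
apply: leq_ltn_trans (size_polyMleq _ _) _.
by rewrite size_polyX size_polyC; case: (p != 0).
Qed.

Lemma size_tpoly : size (tpoly p q) = 3%N.
Proof. by rewrite /tpoly -addrA size_polyDl size_polyXn // size_tpoly_low. Qed.

Lemma tpoly_monic : tpoly p q \is monic.
Proof.
by rewrite monicE /tpoly -addrA lead_coefDl ?lead_coefXn // size_polyXn size_tpoly_low.
Qed.

Lemma tpoly_dvd_small (r S : {poly int}) : (size r < 3)%N -> r = S * tpoly p q -> S = 0.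
Proof.
move=> small_r def_r; apply/eqP; apply: contraTT small_r => nzS.
rewrite def_r size_Mmonic ?tpoly_monic // size_tpoly -leqNgt.
by move: nzS; rewrite -size_poly_gt0; lia.
Qed.

Lemma coef0_mul_tpoly (S : {poly int}) : (S * tpoly p q)`_0 = - (S`_0 * q).
Proof. by rewrite coefM big_ord1 /tpoly !coefE /=; ring. Qed.

(* A carry [s] encodes the residue [carry_poly s]; a digit is read by matching
   constant terms modulo [q] and dividing the remaining difference by [x]. *)
Definition carry_poly (s : int * int) : {poly int} := (p * s.1 + s.2)%:P + s.1%:P * 'X.

Definition carry_step (s : int * int) (c : int) : option (int * int) :=
  let v := p * s.1 + s.2 - c in
  if (q %| v)%Z then Some ((v %/ q)%Z, s.1) else None.

Fixpoint carry_run (s : int * int) (cs : seq int) : option (int * int) :=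
  if cs is c :: cs' then obind (carry_run^~ cs') (carry_step s c) else Some s.

Lemma carry_run_cat s cs1 cs2 :
  carry_run s (cs1 ++ cs2) = obind (carry_run^~ cs2) (carry_run s cs1).
Proof. by elim: cs1 s => //= c cs IHcs s; case: carry_step. Qed.

Hypothesis q_neq0 : q != 0.

Lemma simeq_carry0 s : simeq p q 0 (carry_poly s) <-> s = (0, 0).
Proof.
split=> [[S eqS]|->]; last by exists 0; rewrite /carry_poly !(mulr0, mul0r, addr0, subr0).
have small : (size (0 - carry_poly s)%R < 3)%N.
  rewrite sub0r size_polyN; apply: leq_ltn_trans (size_polyD _ _) _.
  rewrite size_polyC gtn_max (leq_ltn_trans (size_polyMleq _ _)) //.
    by case: (_ != 0).
  by rewrite size_polyC size_polyX; case: (_ != 0).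
have S0 := tpoly_dvd_small small eqS.
move: eqS; rewrite S0 mul0r sub0r => /eqP; rewrite oppr_eq0 => /eqP.
case: s {small} => a b /= eq0.
have a0 : a = 0 by have := congr1 (coefp 1) eq0; rewrite /= !coefE /= add0r mulr1.
have := congr1 (coefp 0) eq0; rewrite /= !coefE /= a0 mulr0 !add0r addr0.
by move->.
Qed.

Lemma simeq_cons_carry c P s :
  simeq p q (cons_poly c P) (carry_poly s) <->
  exists2 s', carry_step s c = Some s' & simeq p q P (carry_poly s').
Proof.
case: s => a b; rewrite /carry_step /carry_poly /=; set v := p * a + b - c.
have def_v S : cons_poly c P - ((p * a + b)%:P + a%:P * 'X) = S * tpoly p q ->
    v = S`_0 * q.
  move/(congr1 (coefp 0)); rewrite /= coef0_mul_tpoly !coefE /= mulr0 addr0.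
  by move=> eq0; rewrite /v -[S`_0 * q]opprK -eq0; ring.
have [dvd_v|ndvd_v] := boolP (q %| v)%Z; last first.
  by split=> [[S /def_v eq_v]|[//]]; case/negP: ndvd_v; rewrite eq_v dvdz_mull.
set a' := (v %/ q)%Z; have def_c : c = p * a + b - a' * q by rewrite divzK // /v; ring.
split=> [[S eqS]|[_ [<-] [S' eqS']]]; last first.
  exists (S' * 'X + a'%:P); rewrite cons_poly_def.
  have -> : P = S' * tpoly p q + ((p * a' + a)%:P + a'%:P * 'X) by rewrite -eqS' subrK.
  by rewrite def_c /tpoly !(polyCD, polyCM, polyCN, polyCB); ring.
exists (a', a) => //; exists (drop_poly 1 S).
have S0 : S`_0 = a' by rewrite /a' (def_v S eqS) mulzK.
have def_S : S = drop_poly 1 S * 'X + a'%:P.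
  apply/polyP => -[|i]; rewrite !coefE /= ?add0r ?S0 //.
  by rewrite addr0 addn1.
apply: (@mulIf _ 'X); first by rewrite polyX_eq0.
move: eqS; rewrite cons_poly_def {1}def_S => eqS.
rewrite mulrBl.
have -> : P * 'X = (drop_poly 1 S * 'X + a'%:P) * tpoly p q - c%:P
                   + ((p * a + b)%:P + a%:P * 'X) by rewrite -eqS; ring.
by rewrite def_c /tpoly !(polyCD, polyCM, polyCN, polyCB); ring.
Qed.

Lemma carry_run_spec s cs :
  carry_run s cs = Some (0, 0) <-> simeq p q (Poly cs) (carry_poly s).
Proof.
elim: cs s => [|c cs IHcs] s /=.
  by rewrite simeq_carry0; split=> [[]|->].
rewrite simeq_cons_carry; case: carry_step => [s'|] /=; last by split=> // -[].
by rewrite IHcs; split=> [|[_ [->]]] //; exists s'.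
Qed.

End Carry.

Lemma norm_ltD1_neq0 (p q : int) : 1 + `|p| < `|q| -> q != 0.
Proof. by move=> hpq; rewrite -normr_gt0; apply: le_lt_trans hpq; rewrite addr_ge0. Qed.

Section CarryAutomaton.
Variables (p q : int).
Hypothesis hpq : 1 + `|p| < `|q|.
Let q_neq0 : q != 0 := norm_ltD1_neq0 hpq.

(* As [|p| + 2 <= |q|], the new carry [(p a + b - c) / q] is again at most [C]. *)
Lemma carry_step_bound (C : int) s c s' :
  `|s.1| <= C -> `|s.2| <= C -> `|c| <= C -> carry_step p q s c = Some s' ->
  `|s'.1| <= C /\ `|s'.2| <= C.
Proof.
move=> le_s1 le_s2 le_c; rewrite /carry_step; case: ifP => // dvd_v [<-] /=.
split=> //; set v := p * s.1 + s.2 - c.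
have le_v : `|v| <= `|q| * C.
  have C_ge0 : 0 <= C := le_trans (normr_ge0 c) le_c.
  have le_pq : `|p| + 2 <= `|q| by move: hpq; lia.
  apply: le_trans (ler_normB _ _) _; apply: le_trans (lerD (ler_normD _ _) le_c) _.
  rewrite normrM; apply: le_trans (lerD (lerD (ler_wpM2l (normr_ge0 p) le_s1) le_s2) (lexx C)) _.
  by apply: le_trans (ler_wpM2r C_ge0 le_pq); lia.
have q_pos : 0 < `|q| by rewrite normr_gt0 q_neq0.
by rewrite -(ler_pM2l q_pos) -normrM mulrC divzK.
Qed.

Variables (A : Type) (E : choiceType) (es : seq E) (e0 : E).
Variables (valid : pred A) (digit : E -> A -> int) (update : E -> A -> E).
Variables (C : nat) (fin : int * int -> E -> bool).
Hypothesis es_e0 : e0 \in es.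
Hypothesis es_update : forall e a, e \in es -> valid a -> update e a \in es.
Hypothesis digit_bound : forall e a, e \in es -> valid a -> `|digit e a| <= C%:Z.

Fixpoint carry_digits (e : E) (x : seq A) : seq int :=
  if x is a :: x' then digit e a :: carry_digits (update e a) x' else [::].

Definition carry_accepts (x : seq A) : bool :=
  all valid x &&
  oapp (fin^~ (foldl update e0 x)) false (carry_run p q (0, 0) (carry_digits e0 x)).

Definition carry_trans (o : option ((int * int) * E)) (a : A) :=
  if o is Some (s, e) then
    if valid a then omap (fun s' => (s', update e a)) (carry_step p q s (digit e a))
    else None
  else None.

Definition carry_states : seq (option ((int * int) * E)) :=
  None :: map Some [seq (s, e) | s <- [seq (x, y) | x <- ints_within C, y <- ints_within C],
                                 e <- es].

Lemma mem_carry_states s e : (Some (s, e) \in carry_states) =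
  [&& `|s.1| <= C%:Z, `|s.2| <= C%:Z & e \in es].
Proof.
rewrite in_cons -[_ == None]/false mem_map; last by move=> ? ? [].
by case: s => x y; rewrite !mem_allpairs_pair !mem_ints_within andbA.
Qed.

Lemma carry_trans_closed o a : o \in carry_states -> carry_trans o a \in carry_states.
Proof.
case: o => [[s e]|//]; rewrite mem_carry_states => /and3P[le_s1 le_s2 es_e] /=.
case: ifP => [valid_a|_]; last by rewrite mem_head.
case step_s: carry_step => [s'|] /=; last by rewrite mem_head.
have [le_s'1 le_s'2] := carry_step_bound le_s1 le_s2 (digit_bound es_e valid_a) step_s.
by rewrite mem_carry_states le_s'1 le_s'2 es_update.
Qed.

Lemma carry_trans_run x s e :
  foldl carry_trans (Some (s, e)) x =
  if all valid x then omap (fun s' => (s', foldl update e x)) (carry_run p q s (carry_digits e x))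
  else None.
Proof.
have dead y : foldl carry_trans None y = None by elim: y.
elim: x s e => [|a x IHx] s e //=.
case: ifP => valid_a /=; last by rewrite dead.
by case: carry_step => [s'|] /=; rewrite ?IHx ?dead; case: all.
Qed.

Lemma fa_recognizable_carry : FA_recognizable_lang carry_accepts.
Proof.
apply: (fa_recognizable_closed (U := carry_states) (s0 := Some ((0, 0), e0))
  (fin := fun o => if o is Some (s, e) then fin s e else false) _ carry_trans_closed).
  by rewrite mem_carry_states normr0 es_e0.
move=> x; rewrite carry_trans_run /carry_accepts.
by case: all; case: carry_run.
Qed.

End CarryAutomaton.

Lemma Poly_cat_nseq0 (s : seq int) n : Poly (s ++ nseq n 0) = Poly s.
Proof.
elim: s => [|a s IHs] /=; last by rewrite IHs.
by elim: n => //= n ->; rewrite cons_poly_def mul0r addr0.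
Qed.

Lemma Poly_zip_sub (u w : seq int) :
  size u = size w -> Poly [seq ab.1 - ab.2 | ab <- zip u w] = Poly u - Poly w.
Proof.
elim: u w => [|a u IHu] [|b w] //= => [_|[sz_uw]]; first by rewrite subr0.
by rewrite !cons_poly_def IHu // polyCB; ring.
Qed.

Section Domain.
Variables (p q : int).
Hypothesis hpq : 1 + `|p| < `|q|.
Let q_neq0 : q != 0 := norm_ltD1_neq0 hpq.

Definition sigma_list : seq int := ints_within (absz q).-1.

Lemma mem_sigma_list a : (a \in sigma_list) = (`|a| < `|q|).
Proof.
have := q_neq0; rewrite mem_ints_within -absz_eq0 -[`|q|]abszE => nz_q; lia.
Qed.

(* The first component records the first difference between the two strings
   read so far ([Some true] when the first string is smaller), the second
   whether the last letter of the first string is zero. *)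
Definition lex_update (o : option bool) (a b : int) : option bool :=
  if o is None then (if a == b then None else Some (a < b)) else o.

Definition dom_update (e : option bool * bool) (ab : int * int) : option bool * bool :=
  (lex_update e.1 ab.1 ab.2, ab.1 == 0).

Lemma dom_update_lex (u w : seq int) z :
  ((foldl dom_update (None, z) (zip u w)).1 == Some true) = lex_lt u w.
Proof.
have fixed b y z' : (foldl dom_update (Some b, z') y).1 = Some b.
  by elim: y z' => // ab y IHy z'; apply: IHy.
elim: u w z => [|a u IHu] [|b w] z //=.
rewrite [dom_update _ _]/dom_update /= /lex_update.
have [->|_] := eqVneq a b; first by rewrite ltxx IHu.
by rewrite fixed orbF; case: (a < b).
Qed.

Lemma dom_update_last (u w : seq int) e : size u = size w ->
  (foldl dom_update e (zip u w)).2 = if u is [::] then e.2 else last 0 u == 0.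
Proof. by elim: u w e => [|a u IHu] [|b w] e //= [/IHu ->]; case: u {IHu}. Qed.

Definition dom_fin (s : int * int) (e : option bool * bool) : bool :=
  (s == (0, 0)) && ((e.1 == Some true) || e.2).

Definition valid_pair (ab : int * int) : bool := (`|ab.1| < `|q|) && (`|ab.2| < `|q|).

(* A candidate shorter than [w] is guessed zero-padded to the length of [w],
   so it shows up as a string whose last letter is [0]. *)
Definition dom_witness : seq (int * int) -> bool :=
  carry_accepts p q (None, false) valid_pair (fun _ ab => ab.1 - ab.2) dom_update dom_fin.

Lemma fa_recognizable_dom_witness : FA_recognizable_lang dom_witness.
Proof.
apply: (@fa_recognizable_carry p q hpq _ _ (enum {: option bool * bool}) _ _ _ _
          (2 * (absz q).-1)) => [|e ab _ _|e [a b] _]; rewrite ?mem_enum //.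
rewrite /valid_pair /= -!mem_sigma_list !mem_ints_within => /andP[le_a le_b].
by apply: le_trans (ler_normB _ _) _; lia.
Qed.

Lemma dom_witness_zip u w : size u = size w -> in_Sigma q u -> in_Sigma q w ->
  dom_witness (zip u w) <->
  str_equiv p q u w /\ (lex_lt u w || (0 < size u)%N && (last 0 u == 0)).
Proof.
move=> sz_uw Su Sw.
have valid_uw : all valid_pair (zip u w).
  elim: u w sz_uw Su Sw => [|a u IHu] [|b w] //= [sz_uw].
  rewrite /in_Sigma /= => /andP[Sa Su] /andP[Sb Sw].
  by rewrite /valid_pair /= Sa Sb IHu.
have digits e : carry_digits (fun _ ab => ab.1 - ab.2) dom_update e (zip u w)
    = [seq ab.1 - ab.2 | ab <- zip u w].
  by elim: (zip u w) e => //= ab x IHx e; rewrite IHx.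
have equiv : str_equiv p q u w <->
    carry_run p q (0, 0) [seq ab.1 - ab.2 | ab <- zip u w] = Some (0, 0).
  rewrite carry_run_spec ?q_neq0 // Poly_zip_sub // /carry_poly /=.
  rewrite mulr0 addr0 polyC0 mul0r addr0 /str_equiv /simeq.
  by split=> -[h eq_h]; exists h; rewrite ?subr0 // -eq_h subr0.
rewrite /dom_witness /carry_accepts valid_uw digits /= equiv.
have flags : ((foldl dom_update (None, false) (zip u w)).1 == Some true)
    || (foldl dom_update (None, false) (zip u w)).2
    = lex_lt u w || (0 < size u)%N && (last 0 u == 0).
  by rewrite dom_update_lex dom_update_last //; case: (u).
case: carry_run => [s|] /=; last by split=> // -[].
by rewrite /dom_fin flags; split=> [/andP[/eqP-> ->]|[[->] ->]].
Qed.

Lemma in_SigmaE u : in_Sigma q u <-> {subset u <= sigma_list}.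
Proof.
by split=> [/allP Su a /Su|Su]; [|apply/allP => a /Su]; rewrite mem_sigma_list.
Qed.

Lemma exists_dom_witness w : in_Sigma q w ->
  (exists u, [/\ size u = size w, {subset u <= sigma_list} & dom_witness (zip u w)]) <->
  exists u, [/\ in_Sigma q u, llex_lt u w & str_equiv p q u w].
Proof.
move=> Sw; split.
  case=> u [sz_uw /in_SigmaE Su /(dom_witness_zip sz_uw Su Sw)[equiv /orP[lt_uw|]]].
    by exists u; split; rewrite // /llex_lt sz_uw ltnn eqxx.
  case/lastP: u sz_uw Su equiv => [//|v a] sz_uw; rewrite last_rcons => Su equiv /andP[_ /eqP a0].
  move: Su equiv; rewrite a0 -cats1 /in_Sigma all_cat => /andP[Sv _] equiv.
  exists v; split => //; first by rewrite /llex_lt -sz_uw size_rcons ltnSn.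
  by move: equiv; rewrite /str_equiv /poly_of (Poly_cat_nseq0 v 1).
case=> u [Su /orP[lt_uw|/andP[/eqP sz_uw lt_uw]] equiv]; last first.
  by exists u; split; rewrite -?in_SigmaE // dom_witness_zip // lt_uw.
set u' := u ++ nseq (size w - size u) 0.
have sz_u' : size u' = size w by rewrite size_cat size_nseq subnKC // ltnW.
have Su' : in_Sigma q u'.
  move: Su; rewrite /in_Sigma all_cat all_nseq => ->.
  by rewrite normr0 normr_gt0 q_neq0 orbT.
exists u'; split; rewrite -?in_SigmaE // dom_witness_zip //; split.
  by rewrite /str_equiv /poly_of Poly_cat_nseq0.
rewrite sz_u' (leq_ltn_trans _ lt_uw) //= /u' last_cat.
apply/orP; right; move: lt_uw; rewrite -subn_gt0.
by case: (size w - size u)%N => // k _; elim: k.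
Qed.

Lemma fa_recognizable_Dom : FA_recognizable_lang (Dom p q).
Proof.
have := fa_recognizable_and (fa_recognizable_all (fun a : int => `|a| < `|q|))
  (fa_recognizable_not (fa_recognizable_exists_zip sigma_list fa_recognizable_dom_witness)).
apply: fa_recognizable_ext => w; rewrite -/(in_Sigma q w).
split=> [[Sw not_witness]|[Sw minimal]]; split => //.
  by move=> u Su lt_uw equiv; apply: not_witness; apply/exists_dom_witness => //; exists u.
by case/exists_dom_witness => // u [Su lt_uw]; apply: minimal.
Qed.

End Domain.

Lemma tpoly_mod_linear (p q : int) (g : {poly int}) :
  exists (a b : int) (k : {poly int}), g = k * tpoly p q + (b%:P + a%:P * 'X).
Proof.
have t_neq0 : tpoly p q != 0 by rewrite -size_poly_eq0 size_tpoly.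
have small := Pdiv.Ring.ltn_rmodpN0 g t_neq0; rewrite size_tpoly in small.
exists (Pdiv.Ring.rmodp g (tpoly p q))`_1, (Pdiv.Ring.rmodp g (tpoly p q))`_0,
       (Pdiv.Ring.rdivp g (tpoly p q)).
rewrite {1}(Pdiv.RingMonic.rdivp_eq (tpoly_monic p q) g); congr (_ + _).
apply/polyP => -[|[|i]]; rewrite !coefE /= ?mulr0 ?addr0 ?mulr1 ?add0r //.
by rewrite nth_default // -ltnS (leq_trans small).
Qed.

Lemma simeq_mulr_mod (p q : int) (f g k r u : {poly int}) :
  g = k * tpoly p q + r -> simeq p q f (g * u) <-> simeq p q f (r * u).
Proof.
move=> ->; split=> -[h eq_h].
  by exists (h + k * u); rewrite mulrDl -eq_h; ring.
by exists (h - k * u); rewrite mulrBl -eq_h; ring.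
Qed.

Section Multiplication.
Variables (p q al be : int).
Hypothesis hpq : 1 + `|p| < `|q|.
Let q_neq0 : q != 0 := norm_ltD1_neq0 hpq.

Local Notation letter := (option int * option int)%type.

Definition valid_letter (l : letter) : bool :=
  (`|odflt 0 l.1| < `|q|) && (`|odflt 0 l.2| < `|q|).

(* Reading the [i]-th letter [(u_i, w_i)], with [prev = u_(i-1)], feeds the
   coefficient of [x^i] in [w - (be + al x) u]; the term [al u_n x^(n+1)]
   is flushed at the end. *)
Definition mul_digit (prev : int) (l : letter) : int :=
  odflt 0 l.2 - be * odflt 0 l.1 - al * prev.

Definition mul_update (prev : int) (l : letter) : int := odflt 0 l.1.

Definition mul_fin (s : int * int) (prev : int) : bool :=
  carry_run p q s [:: - (al * prev)] == Some (0, 0).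

Definition mul_checks : seq letter -> bool :=
  carry_accepts p q 0 valid_letter mul_digit mul_update mul_fin.

Lemma fa_recognizable_mul_checks : FA_recognizable_lang mul_checks.
Proof.
have le_sigma (x : int) : `|x| < `|q| -> `|x| <= ((absz q).-1)%:Z.
  by move=> lt_x; rewrite -mem_ints_within -/(sigma_list q) (mem_sigma_list hpq).
apply: (@fa_recognizable_carry p q hpq _ _ (sigma_list q) _ _ _ _
          ((absz q).-1 * (1 + absz al + absz be))) => [|e l _|e l].
- by rewrite (mem_sigma_list hpq) normr0 normr_gt0 q_neq0.
- by case/andP; rewrite -(mem_sigma_list hpq).
rewrite (mem_sigma_list hpq) => /le_sigma le_e /andP[/le_sigma le_a /le_sigma le_b].
rewrite /mul_digit; move: (odflt 0 l.1) (odflt 0 l.2) le_a le_b => a b le_a le_b.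
apply: le_trans (ler_normB _ _) _; apply: le_trans (lerD (ler_normB _ _) (lexx _)) _.
rewrite !normrM -!abszE; nia.
Qed.

Lemma Poly_mul_digits prev x :
  Poly (carry_digits mul_digit mul_update prev x ++ [:: - (al * foldl mul_update prev x)]) =
  Poly [seq odflt 0 l.2 | l <- x] - (be%:P + al%:P * 'X) * Poly [seq odflt 0 l.1 | l <- x]
  - (al * prev)%:P.
Proof.
elim: x prev => [|l x IHx] prev /=; first by rewrite cons_poly_def polyCN; ring.
by rewrite !cons_poly_def IHx /mul_digit !(polyCD, polyCM, polyCN, polyCB); ring.
Qed.

Lemma mul_checksE x : mul_checks x <->
  all valid_letter x /\
  simeq p q (Poly [seq odflt 0 l.2 | l <- x])
            ((be%:P + al%:P * 'X) * Poly [seq odflt 0 l.1 | l <- x]).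
Proof.
have run_spec cs : (carry_run p q (0, 0) cs == Some (0, 0)) <-> simeq p q (Poly cs) 0.
  rewrite -(rwP eqP) carry_run_spec ?q_neq0 // /carry_poly /=.
  by rewrite mulr0 addr0 polyC0 mul0r addr0.
rewrite /mul_checks /carry_accepts; case: all; last by split=> // -[].
have -> : oapp (mul_fin^~ (foldl mul_update 0 x)) false
    (carry_run p q (0, 0) (carry_digits mul_digit mul_update 0 x))
    = (carry_run p q (0, 0) (carry_digits mul_digit mul_update 0 x
         ++ [:: - (al * foldl mul_update 0 x)]) == Some (0, 0)).
  by rewrite carry_run_cat; case: carry_run.
rewrite run_spec Poly_mul_digits mulr0 polyC0 subr0 /simeq subr0.
by split=> [|[]].
Qed.

Lemma mul_checks_conv2 u w : mul_checks (conv2 u w) <->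
  [/\ in_Sigma q u, in_Sigma q w
     & simeq p q (poly_of w) ((be%:P + al%:P * 'X) * poly_of u)].
Proof.
have valid_conv : all valid_letter (conv2 u w) = in_Sigma q u && in_Sigma q w.
  have zero_ok : `|0 : int| < `|q| by rewrite normr0 normr_gt0 q_neq0.
  have -> : all valid_letter (conv2 u w) =
      all (fun a => `|a| < `|q|) [seq odflt 0 l.1 | l <- conv2 u w] &&
      all (fun a => `|a| < `|q|) [seq odflt 0 l.2 | l <- conv2 u w].
    by rewrite !all_map; elim: (conv2 u w) => //= l x ->; rewrite andbACA.
  by rewrite map_fst_conv2 map_snd_conv2 !all_cat !all_nseq zero_ok !orbT !andbT.
rewrite mul_checksE valid_conv map_fst_conv2 map_snd_conv2 !Poly_cat_nseq0.
by split=> [[/andP[Su Sw] equiv]|[-> -> equiv]].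
Qed.

End Multiplication.

Theorem proposition2 (p q : int) (g : {poly int}) (hpq : 1 + `|p| < `|q|) :
  FA_recognizable_rel2 (phi_graph p q g).
Proof.
have [a [b [k def_g]]] := tpoly_mod_linear p q g.
have := fa_recognizable_conv2 (fa_recognizable_Dom hpq) (fa_recognizable_Dom hpq)
  (fa_recognizable_mul_checks a b hpq).
apply: fa_recognizable_ext => x; split.
  case=> u [w [[Du Dw mul_uw] def_x]]; exists u, w; split=> //.
  move: mul_uw; rewrite def_x => /mul_checks_conv2[// | _ _ equiv].
  by split=> //; split=> //; rewrite (simeq_mulr_mod _ _ def_g).
case=> u [w [[Du [Dw equiv]] def_x]]; exists u, w; split=> //; split=> //.
rewrite def_x; apply/mul_checks_conv2 => //; split; [exact: Du.1 | exact: Dw.1 |].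
by rewrite -(simeq_mulr_mod _ _ def_g).
Qed.
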